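(* A Bratteli diagram $B$ admits an ordering $\omega\in\mathcal O_B$ with $\mathrm{Int}(X_{\max}(\omega))\neq\emptyset$ if and only if there exist $x=(x_i)\in X_B$ and $n\ge1$ such that the cylinder set $U(x_1,\dots,x_n)=\{y\in X_B: y_i=x_i,\ i=1,\dots,n\}$ meets each tail-equivalence class in at most one point. The same statement holds with $X_{\min}(\omega)$ in place of $X_{\max}(\omega)$.
   Context: A Bratteli diagram $B=(V^*,E)$ has levels $V_n$ ($V_0=\{v_0\}$, all finite) and finite edge sets $E_n$ from $V_{n-1}$ to $V_n$, with source and range maps $s,r$. $X_B$ is the space of infinite paths $(x_1,x_2,\dots)$, $x_n\in E_n$, $s(x_1)=v_0$, $r(x_n)=s(x_{n+1})$, with topology generated by cylinder sets. Two paths are tail equivalent if they agree from some index on. An ordering $\omega$ is a choice of linear order on $r^{-1}(v)$ for each $v\neq v_0$; $\mathcal O_B$ is the set of orderings. $X_{\max}(\omega)$ ($X_{\min}(\omega)$) is the set of infinite paths each of whose edges is maximal (minimal) in $r^{-1}$ of its range. $\mathrm{Int}$ denotes topological interior in $X_B$. *)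

From mathcomp Require Import all_boot.
Set Implicit Arguments. Unset Strict Implicit. Unset Printing Implicit Defensive.

(* Levels V_n (n : nat) are finite types with #|V_0| = 1.
   Index shift: [E B n] is the paper's edge set E_{n+1}, going from level n
   to level n+1, with source [src n : E n -> V n] and range
   [rng n : E n -> V n.+1]. *)
Record bratteli := Bratteli {
  V : nat -> finType;
  E : nat -> finType;
  src : forall n, E n -> V n;
  rng : forall n, E n -> V n.+1;
  V0_single : #|V 0| = 1
}.

(* Infinite paths: x n is the paper's x_{n+1}; r(x_{n+1}) = s(x_{n+2}).
   s(x_1) = v_0 is automatic since V_0 is a singleton. *)
Record bpath (B : bratteli) := Path {
  pedge :> forall n, E B n;
  pedgeP : forall n, rng (pedge n) = src (pedge n.+1)
}.

Definition same_path B (x y : bpath B) : Prop := forall k, x k = y k.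

Definition cylinder B (x : bpath B) (n : nat) : bpath B -> Prop :=
  fun y => forall i, i < n -> y i = x i.

(* Topology generated by cylinder sets (they form a base). *)
Definition is_open B (O : bpath B -> Prop) : Prop :=
  forall x, O x -> exists n, forall y, cylinder x n y -> O y.

Definition interior B (A : bpath B -> Prop) : bpath B -> Prop :=
  fun x => exists O, is_open O /\ O x /\ (forall y, O y -> A y).

Definition tail_equiv B (x y : bpath B) : Prop :=
  exists m, forall k, m <= k -> x k = y k.

(* An ordering: for every vertex v (of level >= 1) a linear order on r^{-1}(v).
   It is given by a relation on each E n; only its restriction to the fibres
   r^{-1}(v) matters. *)
Definition is_ordering B (w : forall n, rel (E B n)) : Prop :=
  forall n (v : V B n.+1),
    (forall e, rng e = v -> w n e e) /\
    (forall e f, rng e = v -> rng f = v -> w n e f -> w n f e -> e = f) /\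
    (forall e f g, rng e = v -> rng f = v -> rng g = v ->
        w n e f -> w n f g -> w n e g) /\
    (forall e f, rng e = v -> rng f = v -> w n e f || w n f e).

Definition is_max_edge B (w : forall n, rel (E B n)) n (e : E B n) : Prop :=
  forall f, rng f = rng e -> w n f e.

Definition is_min_edge B (w : forall n, rel (E B n)) n (e : E B n) : Prop :=
  forall f, rng f = rng e -> w n e f.

Definition Xmax B (w : forall n, rel (E B n)) : bpath B -> Prop :=
  fun x => forall n, is_max_edge w (x n).

Definition Xmin B (w : forall n, rel (E B n)) : bpath B -> Prop :=
  fun x => forall n, is_min_edge w (x n).

Definition cyl_tail_injective B (x : bpath B) (n : nat) : Prop :=
  forall y z, cylinder x n y -> cylinder x n z -> tail_equiv y z -> same_path y z.

(* Call a family of edge sets [P k] "fibre-unique" if each fibre r^{-1}(v)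
   contains at most one edge of P.  Two tail-equivalent paths that only use
   edges of a fibre-unique family coincide: going backwards from the level
   where they agree, equal ranges force equal edges.

   - If [w] is an ordering, its maximal edges form a fibre-unique family, so
     a cylinder inside Int(X_max(w)) meets every tail class at most once.
   - Conversely, if U(x_1..x_n) meets every tail class at most once, the edges
     used by paths of U form a fibre-unique family (otherwise splicing two such
     paths at a common vertex gives two distinct tail-equivalent paths in U).
     Putting these edges on top of an arbitrary order in each fibre yields an
     ordering with U inside X_max, and U is open.
   The X_min statement reduces to the X_max one by reversing the ordering. *)

From mathcomp Require Import all_boot boolp.

Set Implicit Arguments.
Unset Strict Implicit.

Section Bratteli.
Variable B : bratteli.

Definition fibre_unique (P : forall k, E B k -> Prop) : Prop :=
  forall k (e f : E B k), rng e = rng f -> P k e -> P k f -> e = f.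

Definition follows (P : forall k, E B k -> Prop) (y : bpath B) : Prop :=
  forall k, P k (y k).

Lemma follows_tail_equiv (P : forall k, E B k -> Prop) (y z : bpath B) :
  fibre_unique P -> follows P y -> follows P z -> tail_equiv y z ->
  same_path y z.
Proof.
move=> uniqP Py Pz [m agree_from_m].
suff agree_below : forall d k, m <= k + d -> y k = z k.
  by move=> k; apply: (agree_below m); rewrite leq_addl.
elim=> [|d IH] k le_m.
  by apply: agree_from_m; rewrite addn0 in le_m.
have next_eq : y k.+1 = z k.+1 by apply: IH; rewrite addSn -addnS.
by apply: uniqP (Py k) (Pz k); rewrite (pedgeP y) (pedgeP z) next_eq.
Qed.

Lemma cylinder_shrink (x y : bpath B) (m n : nat) :
  m <= n -> cylinder x n y -> cylinder x m y.
Proof. by move=> le_mn xy i lt_im; apply: xy; apply: leq_trans le_mn. Qed.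

Lemma open_follows_tail_injective P (O : bpath B -> Prop) (x : bpath B) :
  fibre_unique P -> is_open O -> O x -> (forall y, O y -> follows P y) ->
  exists n, 1 <= n /\ cyl_tail_injective x n.
Proof.
move=> uniqP openO Ox O_follows; have [n cylO] := openO x Ox.
exists n.+1; split=> // y z xy xz; apply: follows_tail_equiv uniqP _ _.
- by apply/O_follows/cylO/(cylinder_shrink (leqnSn n)).
- by apply/O_follows/cylO/(cylinder_shrink (leqnSn n)).
Qed.

Lemma max_edges_fibre_unique w :
  is_ordering w -> fibre_unique (fun k (e : E B k) => is_max_edge w e).
Proof.
move=> ord_w k e f same_rng max_e max_f.
have [_ [antisym _]] := ord_w k (rng e).
by apply: antisym => //; [apply: max_f | apply: max_e].
Qed.

Definition rev_order (w : forall k, rel (E B k)) : forall k, rel (E B k) :=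
  fun k e f => w k f e.

Lemma rev_order_ordering w : is_ordering w -> is_ordering (rev_order w).
Proof.
move=> ord_w k v; have [refl [antisym [trans total]]] := ord_w k v.
split; [exact: refl | split; [|split]].
- by move=> e f re rf wfe wef; apply: antisym.
- by move=> e f g re rf rg wfe wgf; apply: (trans g f e).
- by move=> e f re rf; rewrite /rev_order orbC; apply: total.
Qed.

Lemma exists_min_iff_max :
  (exists w, is_ordering w /\ exists x : bpath B, interior (Xmin w) x) <->
  (exists w, is_ordering w /\ exists x : bpath B, interior (Xmax w) x).
Proof.
by split=> -[w [ord_w int_w]]; exists (rev_order w);
  split=> //; apply: rev_order_ordering.
Qed.

Definition top_order (top : forall k, pred (E B k)) : forall k, rel (E B k) :=
  fun k e f =>
    if top k e == top k f then enum_rank e <= enum_rank f else top k f.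

Lemma top_order_ordering (top : forall k, pred (E B k)) :
  is_ordering (top_order top).
Proof.
move=> k v; rewrite /top_order; split; [|split; [|split]].
- by move=> e _; rewrite eqxx leqnn.
- move=> e f _ _; rewrite eq_sym; case: eqP => [_ ef fe | neq ef fe].
    by apply/enum_rank_inj/val_inj/eqP; rewrite eqn_leq ef fe.
  by case: neq; rewrite ef fe.
- by move=> e f g _ _ _; case: (top k e); case: (top k f); case: (top k g)
    => //=; apply: leq_trans.
- by move=> e f _ _; case: (top k e); case: (top k f); rewrite /= ?leq_total.
Qed.

Lemma top_order_max (top : forall k, pred (E B k)) k (e : E B k) :
  fibre_unique (fun k (f : E B k) => top k f) -> top k e ->
  is_max_edge (top_order top) e.
Proof.
move=> uniq_top top_e f same_rng; rewrite /top_order top_e.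
by case top_f: (top k f) => //; rewrite (uniq_top k f e) ?leqnn.
Qed.

Definition splice (y z : bpath B) (k : nat) (same_rng : rng (y k) = rng (z k)) :
  bpath B.
Proof.
refine (@Path B (fun i => if i <= k then y i else z i) _) => i.
case: (ltngtP i k) => [lt_ik | lt_ki | ->].
- by rewrite (pedgeP y).
- exact: pedgeP.
- by rewrite same_rng (pedgeP z).
Defined.

Section CylinderOrdering.
Variables (x : bpath B) (n : nat).
Hypothesis cyl_inj : cyl_tail_injective x n.

Definition cyl_edge k (e : E B k) : bool :=
  `[< exists y, cylinder x n y /\ y k = e >].

(* By tail-injectivity of the cylinder, splicing two of its paths at a
   common vertex shows that cylinder edges are fibre-unique. *)
Lemma cyl_edge_fibre_unique :
  fibre_unique (fun k (e : E B k) => cyl_edge e).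
Proof.
move=> k e f + /asboolP[y [xy ye]] /asboolP[z [xz zf]].
rewrite -{}ye -{}zf => same_rng.
have spliced_in_cyl : cylinder x n (splice same_rng).
  by move=> i lt_in /=; case: ifP => _; [apply: xy | apply: xz].
have spliced_tail : tail_equiv (splice same_rng) z.
  by exists k.+1 => j lt_kj /=; rewrite leqNgt lt_kj.
by have := cyl_inj spliced_in_cyl xz spliced_tail k; rewrite /= leqnn.
Qed.

Lemma cylinder_in_Xmax : interior (Xmax (top_order cyl_edge)) x.
Proof.
exists (cylinder x n); split; last split=> //.
  by move=> y xy; exists n => z yz i lt_in; rewrite yz // xy.
move=> y xy k; apply: top_order_max; first exact: cyl_edge_fibre_unique.
by apply/asboolP; exists y.
Qed.

End CylinderOrdering.
End Bratteli.

Theorem mainTheorem4 (B : bratteli) :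
  ((exists w, is_ordering w /\ exists x : bpath B, interior (Xmax w) x) <->
   (exists (x : bpath B) (n : nat), 1 <= n /\ cyl_tail_injective x n)) /\
  ((exists w, is_ordering w /\ exists x : bpath B, interior (Xmin w) x) <->
   (exists (x : bpath B) (n : nat), 1 <= n /\ cyl_tail_injective x n)).
Proof.
have max_case :
  (exists w, is_ordering w /\ exists x : bpath B, interior (Xmax w) x) <->
  (exists (x : bpath B) (n : nat), 1 <= n /\ cyl_tail_injective x n).
  split=> [[w [ord_w [x [O [openO [Ox OX]]]]]] | [x [n [_ cyl_inj]]]].
    exists x; apply: open_follows_tail_injective Ox OX => //.
    exact: max_edges_fibre_unique.
  exists (top_order (cyl_edge x n)); split; first exact: top_order_ordering.
  by exists x; apply: cylinder_in_Xmax.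
by split=> //; exact: iff_trans (exists_min_iff_max B) max_case.
Qed.
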